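(* Let $\mathcal{B}$ be a prime Banach algebra over $\mathbb{R}$ or $\mathbb{C}$, and let $\mathcal{H}_1,\mathcal{H}_2$ be non-empty open subsets of $\mathcal{B}$. Suppose $\mathcal{B}$ admits a continuous generalized derivation $F$ associated with a derivation $d$ that is not injective, such that for every $(x,y)\in\mathcal{H}_1\times\mathcal{H}_2$ there exist positive integers $p=p(x,y)$, $q=q(x,y)$ with $$F(x^{p}y^{q})+x^{p}\circ y^{q}\in Z(\mathcal{B}).$$ Then $\mathcal{B}$ is commutative or $d(Z(\mathcal{B}))=\{0\}$.
   Context: $Z(\mathcal{B})$ denotes the center of $\mathcal{B}$. For $x,y\in\mathcal{B}$, $x\circ y=xy+yx$ and $[x,y]=xy-yx$. $\mathcal{B}$ is prime if $x\mathcal{B}y=\{0\}$ implies $x=0$ or $y=0$. A derivation is an additive map $d:\mathcal{B}\to\mathcal{B}$ with $d(xy)=d(x)y+xd(y)$ for all $x,y$. A generalized derivation associated with the derivation $d$ is an additive map $F:\mathcal{B}\to\mathcal{B}$ with $F(xy)=F(x)y+xd(y)$ for all $x,y\in\mathcal{B}$. *)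

From HB Require Import structures.
From mathcomp Require Import all_boot all_order all_algebra.
From mathcomp Require Import all_classical all_reals all_analysis.
Set Implicit Arguments. Unset Strict Implicit. Unset Printing Implicit Defensive.
Import Order.TTheory GRing.Theory Num.Theory.
Import numFieldNormedType.Exports.
Local Open Scope classical_set_scope.
Local Open Scope ring_scope.

Definition banach_algebra_mul (R : realType) (V : completeNormedModType R)
  (mul : V -> V -> V) : Prop :=
  (forall x y z, mul x (mul y z) = mul (mul x y) z) /\
      (forall x y z, mul (x + y) z = mul x z + mul y z) /\
      (forall x y z, mul x (y + z) = mul x y + mul x z) /\
      (forall (a : R) x y, mul (a *: x) y = a *: mul x y) /\
      (forall (a : R) x y, mul x (a *: y) = a *: mul x y) /\
      (forall x y, `|mul x y| <= `|x| * `|y|).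

Section AlgDefs.
Variables (V : zmodType) (mul : V -> V -> V).

Definition alg_center : set V := [set z | forall x, mul z x = mul x z].

Definition prime_alg : Prop :=
  forall x y, (forall b, mul (mul x b) y = 0) -> x = 0 \/ y = 0.

Definition jordan (x y : V) : V := mul x y + mul y x.

(* apow x n = x^n for n >= 1 (apow x 0 = x, never used) *)
Definition apow (x : V) (n : nat) : V := iter n.-1 (mul x) x.

Definition is_derivation (d : V -> V) : Prop :=
  (forall x y, d (x + y) = d x + d y) /\
  (forall x y, d (mul x y) = mul (d x) y + mul x (d y)).

Definition is_gen_derivation (F d : V -> V) : Prop :=
  (forall x y, F (x + y) = F x + F y) /\
  (forall x y, F (mul x y) = mul (F x) y + mul x (d y)).
End AlgDefs.

From HB Require Import structures.
From mathcomp Require Import all_boot all_order all_algebra.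
From mathcomp Require Import all_classical all_reals all_analysis.
Import Order.TTheory GRing.Theory Num.Theory.
Import numFieldNormedType.Exports.
Local Open Scope classical_set_scope.
Local Open Scope ring_scope.
Set Implicit Arguments. Unset Strict Implicit. Unset Printing Implicit Defensive.

(* Assume some central z has d z <> 0; we show that B is commutative.  The
   centre is closed and F (x^p y^q) + x^p o y^q is jointly continuous, so by
   Baire's theorem on H1 x H2 one pair (p, q) works on a whole product of balls
   B(x0, e) x B(y0, e).  Inside these balls x can be perturbed to x + t v for
   small t = 1/(m+1): the condition then says that a polynomial in t is
   central at all these t, and since the centre is a closed subspace every
   coefficient of that polynomial is central.
   Perturbing along v = z x, the linear coefficient is
   p (x^p y^q d(z) + z (F (x^p y^q) + x^p o y^q)), so x^p y^q d(z) and hence,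
   by primeness, x^p y^q is central.  Perturbing along v = z, the two leading
   coefficients show that y^q and x y^q are central for x near x0, hence b y^q
   is central for every b.  Finally some y near y0 has y^q <> 0 (the leading
   coefficient z^q of (y0 + t z)^q is non-zero), and a central element c <> 0
   with B c central forces [a, b] c = 0, i.e. commutativity. *)

Section PairComplete.
Variables (R : realType) (V : completeNormedModType R).

(* [V * V] under a new name, so that it can carry a completeness instance. *)
Definition pair_space := (V * V)%type.
HB.instance Definition _ := NormedModule.copy pair_space (V * V)%type.

Lemma pair_ballE (a b : pair_space) e : ball a e b <-> ball a.1 e b.1 /\ ball a.2 e b.2.
Proof. by []. Qed.

Lemma pair_cauchy_cvg (F : set_system pair_space) : ProperFilter F -> cauchy F -> cvg F.
Proof.
move=> PF /cauchyP cF.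
have cvg_image (f : pair_space -> V) :
    (forall a b e, ball a e b -> ball (f a) e (f b)) -> cvg (f @ F).
  move=> f_ball; apply: cauchy_cvg; apply/cauchyP => e e_gt0.
  have [w Fw] := cF e e_gt0; exists (f w).
  suff : F (f @^-1` ball (f w) e) by [].
  by apply: filterS Fw => w'; exact: f_ball.
have c1 : cvg (fst @ F) by apply: cvg_image => a b e /pair_ballE [].
have c2 : cvg (snd @ F) by apply: cvg_image => a b e /pair_ballE [].
apply/cvg_ex; exists (lim (fst @ F), lim (snd @ F)).
apply/fcvg_ballP => e e_gt0.
have F1 : F (fst @^-1` ball (lim (fst @ F)) e) by move/fcvg_ballP: c1 => /(_ e e_gt0).
have F2 : F (snd @^-1` ball (lim (snd @ F)) e) by move/fcvg_ballP: c2 => /(_ e e_gt0).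
by apply: filterS (filterI F1 F2) => w [? ?]; apply/pair_ballE.
Qed.

HB.instance Definition _ := Uniform_isComplete.Build pair_space pair_cauchy_cvg.

End PairComplete.

Lemma open_setX (T U : topologicalType) (A : set T) (B : set U) :
  open A -> open B -> open (A `*` B).
Proof.
rewrite !openE => oA oB [a b] [/= Aa Bb].
by exists (A, B) => //; split; [exact: oA | exact: oB].
Qed.

Section BaireCover.
Variables (R : realType) (U : completeNormedModType R).

Lemma dense_setC_of_no_ball (S : set U) :
  (forall w (e : R), 0 < e -> ~ ball w e `<=` S) -> dense (~` S).
Proof.
move=> noball A [a Aa] oA; apply: contrapT => AS0.
have AS : A `<=` S.
  by move=> v Av; apply: contrapT => nSv; apply: AS0; exists v.
have /nbhs_ballP [e e_gt0 eA] : nbhs a A by apply: open_nbhs_nbhs.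
exact: noball e_gt0 (subset_trans eA AS).
Qed.

Lemma closed_cover_ball (J : countType) (C : J -> set U) (H : set U) :
  open H -> H !=set0 -> (forall i, closed (C i)) -> H `<=` \bigcup_i C i ->
  exists i (w : U) (e : R), 0 < e /\ ball w e `<=` C i.
Proof.
move=> oH H0 cC HC; apply: contrapT => noball.
pose D n := oapp C set0 (unpickle n).
have odD n : open (~` D n) /\ dense (~` D n).
  split; first by rewrite openC /D; case: unpickle => [i|]; [exact: cC | exact: closed0].
  apply: dense_setC_of_no_ball => w e e_gt0 wD; apply: noball.
  move: wD; rewrite /D; case: unpickle => [i|] /= wD; first by exists i, w, e.
  by have := wD w (ballxx w e_gt0).
have [v [Hv Dv]] := Baire odD H0 oH.
have [i _ Civ] := HC v Hv.
by move: (Dv (pickle i) I); rewrite /D pickleK.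
Qed.

End BaireCover.

Section VectorPolynomial.
Variables (R : realType) (V : normedModType R).

Definition vpoly (n : nat) (c : nat -> V) (t : R) : V := \sum_(k < n.+1) t ^+ k *: c k.

Lemma vpolyS n c t : vpoly n.+1 c t = c 0%N + t *: vpoly n (fun k => c k.+1) t.
Proof.
rewrite /vpoly big_ord_recl expr0 scale1r scaler_sumr; congr (_ + _).
by apply: eq_bigr => i _; rewrite lift0 exprS scalerA.
Qed.

Lemma vpoly0 n c : vpoly n c 0 = c 0%N.
Proof.
case: n => [|n]; first by rewrite /vpoly big_ord1 expr0 scale1r.
by rewrite vpolyS scale0r addr0.
Qed.

Lemma vpolyD n c c' t : vpoly n c t + vpoly n c' t = vpoly n (fun k => c k + c' k) t.
Proof. by rewrite /vpoly -big_split; apply: eq_bigr => i _; rewrite scalerDr. Qed.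

Lemma continuous_vpoly n c : continuous (vpoly n c).
Proof.
elim: n c => [|n IH] c.
  have -> : vpoly 0 c = cst (c 0%N).
    by apply/funext => t; rewrite /vpoly big_ord1 expr0 scale1r.
  exact: cst_continuous.
have -> : vpoly n.+1 c = fun t => c 0%N + t *: vpoly n (fun k => c k.+1) t.
  by apply/funext => t; exact: vpolyS.
move=> t; apply: cvgD; first exact: cvg_cst.
by apply: cvgZ; [exact: cvg_id | exact: IH].
Qed.

Lemma vpoly_coef_closed (S : set V) : closed S -> S 0 ->
  (forall a b, S a -> S b -> S (a - b)) ->
  forall n c, (\forall m \near \oo, S (vpoly n c (harmonic m))) ->
  forall k, (k <= n)%N -> S (c k).
Proof.
move=> cS S0 SB.
have SN a : S a -> S (- a) by move=> Sa; rewrite -sub0r; exact: SB.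
have SD a b : S a -> S b -> S (a + b).
  by move=> Sa Sb; rewrite -[b]opprK; apply: SB => //; exact: SN.
have SMn a m : S a -> S (a *+ m).
  by move=> Sa; elim: m => [|m IH]; rewrite ?mulr0n // mulrS; exact: SD.
have coef0 n c : (\forall m \near \oo, S (vpoly n c (harmonic m))) -> S (c 0%N).
  move=> Sc; rewrite -(vpoly0 n c); apply: (closed_cvg _ cS Sc).
  apply: continuous_cvg; [exact: continuous_vpoly | exact: cvg_harmonic].
elim=> [|n IH] c Sc [|k] // k_le; try exact: coef0 Sc.
have Sc0 := coef0 _ _ Sc.
apply: (IH (fun k => c k.+1) _ k k_le); apply: filterS Sc => m Sm.
have -> : vpoly n (fun k => c k.+1) (harmonic m) =
           (vpoly n.+1 c (harmonic m) - c 0%N) *+ m.+1.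
  by rewrite vpolyS addrC addKr -scaler_nat scalerA /= mulfV ?scale1r // pnatr_eq0.
by apply/SMn/SB.
Qed.

Lemma closed_set0 : closed [set 0 : V].
Proof. by apply: accessible_closed_set1; apply: hausdorff_accessible; exact: norm_hausdorff. Qed.

Lemma near_ball_shift (x0 x v : V) (e : R) : ball x0 e x ->
  \forall m \near \oo, ball x0 e (x + harmonic m *: v).
Proof.
move=> x_ball.
have : (x + harmonic m *: v) @[m --> \oo] --> x.
  rewrite -[X in _ --> X]addr0 -(scale0r v); apply: cvgD; first exact: cvg_cst.
  by apply: cvgZ; [exact: cvg_harmonic | exact: cvg_cst].
by apply; apply: open_nbhs_nbhs; split => //; exact: ball_open.
Qed.

End VectorPolynomial.

Section BanachAlgebra.
Variables (R : realType) (V : completeNormedModType R) (mul : V -> V -> V).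
Variables (F d : V -> V).
Hypothesis BA : banach_algebra_mul mul.
Hypothesis PR : prime_alg mul.
Hypothesis HD : is_derivation mul d.
Hypothesis HF : is_gen_derivation mul F d.

Local Notation "x ** y" := (mul x y) (at level 40, left associativity).
Local Notation "x ^^ n" := (apow mul x n) (at level 29, left associativity).
Local Notation central := (alg_center mul).

Lemma mulA x y z : x ** (y ** z) = x ** y ** z. Proof. by case: BA. Qed.
Lemma mulDl x y z : (x + y) ** z = x ** z + y ** z. Proof. by case: BA => _ []. Qed.
Lemma mulDr x y z : x ** (y + z) = x ** y + x ** z. Proof. by case: BA => _ [_ []]. Qed.
Lemma mulZl (a : R) x y : (a *: x) ** y = a *: (x ** y).
Proof. by case: BA => _ [_ [_ []]]. Qed.
Lemma mulZr (a : R) x y : x ** (a *: y) = a *: (x ** y).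
Proof. by case: BA => _ [_ [_ [_ []]]]. Qed.
Lemma norm_mul_le x y : `|x ** y| <= `|x| * `|y|.
Proof. by case: BA => _ [_ [_ [_ [_ ]]]]. Qed.

Lemma mul0l y : 0 ** y = 0.
Proof. by apply: (addrI (0 ** y)); rewrite -mulDl !addr0. Qed.
Lemma mul0r y : y ** 0 = 0.
Proof. by apply: (addrI (y ** 0)); rewrite -mulDr !addr0. Qed.
Lemma mulBl x y z : (x - y) ** z = x ** z - y ** z.
Proof. by rewrite mulDl -scaleN1r mulZl scaleN1r. Qed.
Lemma mulBr x y z : x ** (y - z) = x ** y - x ** z.
Proof. by rewrite mulDr -scaleN1r mulZr scaleN1r. Qed.

Lemma mul_suml (I : Type) (r : seq I) (P : pred I) (f : I -> V) y :
  (\sum_(i <- r | P i) f i) ** y = \sum_(i <- r | P i) f i ** y.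
Proof. exact: (big_morph (mul^~ y) (fun a b => mulDl a b y) (mul0l y)). Qed.
Lemma mul_sumr (I : Type) (r : seq I) (P : pred I) (f : I -> V) y :
  y ** (\sum_(i <- r | P i) f i) = \sum_(i <- r | P i) y ** f i.
Proof. exact: (big_morph (mul y) (mulDr y) (mul0r y)). Qed.

Lemma center0 : central 0. Proof. by move=> x; rewrite mul0l mul0r. Qed.
Lemma centerD a b : central a -> central b -> central (a + b).
Proof. by move=> Za Zb x; rewrite mulDl mulDr Za Zb. Qed.
Lemma centerZ (k : R) a : central a -> central (k *: a).
Proof. by move=> Za x; rewrite mulZl mulZr Za. Qed.
Lemma centerB a b : central a -> central b -> central (a - b).
Proof. by move=> Za Zb; apply: centerD => //; rewrite -scaleN1r; exact: centerZ. Qed.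
Lemma centerM a b : central a -> central b -> central (a ** b).
Proof. by move=> Za Zb x; rewrite -mulA Zb mulA Za -mulA. Qed.
Lemma centerZK (k : R) a : k != 0 -> central (k *: a) -> central a.
Proof. by move=> k0 /(centerZ k^-1); rewrite scalerA mulVf // scale1r. Qed.

Lemma mul_cvg (T : Type) (G : set_system T) {FG : Filter G} (f g : T -> V) a b :
  f @ G --> a -> g @ G --> b -> (fun t => f t ** g t) @ G --> a ** b.
Proof.
move=> fa gb; apply/cvgrPdist_lt => e e_gt0.
have k1 : 0 < Num.min 1 (e / 2 / (`|b| + 1)).
  by rewrite lt_min ltr01 /= !divr_gt0 // ltr_wpDl.
have k2 : 0 < e / 2 / (`|a| + 1) by rewrite !divr_gt0 // ltr_wpDl.
move/cvgrPdist_lt: fa => /(_ _ k1) near_f.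
move/cvgrPdist_lt: gb => /(_ _ k2) near_g.
apply: filterS2 near_f near_g => t; rewrite lt_min => /andP [ft1 ft] gt.
have -> : a ** b - f t ** g t = (a - f t) ** b + f t ** (b - g t).
  by rewrite mulBl mulBr addrA subrK.
have ft_le : `|f t| <= `|a| + 1.
  have -> : f t = a - (a - f t) by rewrite opprB addrC subrK.
  by apply: (le_trans (ler_normB _ _)); rewrite lerD2l ltW.
rewrite (splitr e); apply: (le_lt_trans (ler_normD _ _)); apply: ler_ltD.
  apply: (le_trans (norm_mul_le _ _)).
  rewrite -[e / 2](@divfK _ (`|b| + 1)) ?gt_eqF ?ltr_wpDl //.
  by apply: ler_pM => //; [exact: ltW | rewrite lerDl].
apply: (le_lt_trans (norm_mul_le _ _)).
apply: (@le_lt_trans _ _ ((`|a| + 1) * `|b - g t|)); first exact: ler_wpM2r.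
by rewrite -ltr_pdivlMl ?ltr_wpDl // mulrC.
Qed.

Lemma continuous_mul (T : topologicalType) (f g : T -> V) :
  continuous f -> continuous g -> continuous (fun t => f t ** g t).
Proof. by move=> cf cg t; exact: mul_cvg (cf t) (cg t). Qed.

Lemma continuous_apow (T : topologicalType) (f : T -> V) n :
  continuous f -> continuous (fun t => f t ^^ n).
Proof. by move=> cf; rewrite /apow; elim: n.-1 => [//|k IH] /=; exact: continuous_mul. Qed.

Lemma center_closed : closed central.
Proof.
have -> : central = \bigcap_x ((fun z => z ** x - x ** z) @^-1` [set 0]).
  apply/seteqP; split=> z Zz x; first by move=> _ /=; rewrite Zz subrr.
  by apply: subr0_eq; exact: Zz x I.
apply: closed_bigI => x _; apply: preimage_closed.
  move=> z _; apply: cvgB.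
  - by apply: (mul_cvg (f := id) (g := cst x)); [exact: cvg_id | exact: cvg_cst].
  - by apply: (mul_cvg (f := cst x) (g := id)); [exact: cvg_cst | exact: cvg_id].
exact: closed_set0.
Qed.

Lemma iter_mulr z k w y : iter k (mul z) w ** y = iter k (mul z) (w ** y).
Proof. by elim: k => [//|k IH]; rewrite /= -mulA IH. Qed.

Lemma iter_mul_center z k x : central z -> x ** iter k (mul z) z = iter k.+1 (mul z) x.
Proof.
by move=> Zz; elim: k => [|k IH]; [rewrite /= Zz | rewrite /= mulA -Zz -mulA IH].
Qed.

Lemma apowS x n : (0 < n)%N -> x ^^ n.+1 = x ** x ^^ n.
Proof. by case: n. Qed.

Lemma mul_center_eq0 c w : central c -> c <> 0 -> w ** c = 0 -> w = 0.
Proof.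
move=> Zc c0 wc0.
have : forall b, w ** b ** c = 0 by move=> b; rewrite -mulA -Zc mulA wc0 mul0l.
by move/PR => [].
Qed.

Lemma center_cancel c w : central c -> c <> 0 -> central (w ** c) -> central w.
Proof.
move=> Zc c0 Zwc x; apply/eqP; rewrite -subr_eq0; apply/eqP.
apply: (mul_center_eq0 Zc c0).
by rewrite mulBl -mulA -Zc mulA -(mulA x) -Zwc subrr.
Qed.

Lemma center_cancel_l c w : central c -> c <> 0 -> central (c ** w) -> central w.
Proof. by move=> Zc; rewrite Zc; exact: center_cancel. Qed.

Lemma apow_center z n : central z -> z <> 0 -> central (z ^^ n) /\ z ^^ n <> 0.
Proof.
move=> Zz z0; rewrite /apow; elim: n.-1 => [//|k [Zzk zk0]]; split; first exact: centerM.
by move=> /= zzk0; apply: zk0; apply: (mul_center_eq0 Zz z0); rewrite -Zz.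
Qed.

Lemma iter_center_cancel z k w : central z -> z <> 0 -> central (iter k (mul z) w) -> central w.
Proof.
move=> Zz z0; elim: k => [//|k IH] Zw; apply: IH.
exact: center_cancel_l Zz z0 Zw.
Qed.

Lemma commutative_of_central_ideal c : central c -> c <> 0 ->
  (forall b, central (b ** c)) -> forall a b, a ** b = b ** a.
Proof.
move=> Zc c0 Zbc a b; apply/eqP; rewrite -subr_eq0; apply/eqP.
apply: (mul_center_eq0 Zc c0).
by rewrite mulBl -!mulA -(Zbc a b) -mulA (Zc b) subrr.
Qed.

(* [powD_coef a b m k] is the coefficient of t^k in (a + t b)^(m+1). *)
Fixpoint powD_coef (a b : V) (m : nat) : nat -> V :=
  if m is m'.+1 then fun k =>
    (if (k <= m'.+1)%N then a ** powD_coef a b m' k else 0) +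
    (if k is k'.+1 then b ** powD_coef a b m' k' else 0)
  else fun k => if k == 0%N then a else if k == 1%N then b else 0.

Lemma vpoly_mull n c (t : R) y : vpoly n c t ** y = vpoly n (fun k => c k ** y) t.
Proof. by rewrite /vpoly mul_suml; apply: eq_bigr => i _; exact: mulZl. Qed.
Lemma vpoly_mulr n c (t : R) y : y ** vpoly n c t = vpoly n (fun k => y ** c k) t.
Proof. by rewrite /vpoly mul_sumr; apply: eq_bigr => i _; exact: mulZr. Qed.

Lemma apowD_vpoly a b m (t : R) : (a + t *: b) ^^ m.+1 = vpoly m.+1 (powD_coef a b m) t.
Proof.
elim: m => [|m IH].
  by rewrite /vpoly /= big_ord_recr big_ord1 /= expr0 scale1r expr1.
rewrite apowS // IH /vpoly /=.
under [RHS]eq_bigr do rewrite scalerDr.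
rewrite big_split /= [X in _ = X + _]big_ord_recr [X in _ = _ + X]big_ord_recl /=.
rewrite ltnn scaler0 addr0 scaler0 add0r mulDl !mul_sumr; congr (_ + _).
  by apply: eq_bigr => i _; rewrite ifT ?mulZr // -ltnS ltn_ord.
by apply: eq_bigr => i _; rewrite mulZl mulZr scalerA /bump /= add1n exprS.
Qed.

Lemma powD_coef0 z a m : powD_coef a (z ** a) m 0 = a ^^ m.+1.
Proof. by elim: m => [//|m IH]; rewrite /= IH addr0 -apowS. Qed.

Lemma powD_coef1 z a m : central z -> powD_coef a (z ** a) m 1 = m.+1%:R *: (z ** a ^^ m.+1).
Proof.
move=> Zz; elim: m => [|m IH]; first by rewrite /= scale1r.
have -> : a ^^ m.+2 = a ** a ^^ m.+1 by [].
rewrite /= IH powD_coef0 mulZr mulA -Zz -!mulA.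
by rewrite -[X in _ + X]scale1r -scalerDl natr1.
Qed.

Lemma powD_coef_top a z m : powD_coef a z m m.+1 = z ^^ m.+1.
Proof. by elim: m => [//|m IH]; rewrite /= ltnn add0r IH. Qed.

Lemma powD_coef_subtop a z m : central z -> powD_coef a z m m = m.+1%:R *: iter m (mul z) a.
Proof.
move=> Zz; elim: m => [|m IH]; first by rewrite /= scale1r.
rewrite /= leqnn IH powD_coef_top mulZr /apow /= iter_mul_center //.
by rewrite -[X in X + _]scale1r -scalerDl addrC natr1.
Qed.

Lemma F0 : F 0 = 0.
Proof. by case: HF => FD _; apply: (addrI (F 0)); rewrite -FD !addr0. Qed.
Lemma d0 : d 0 = 0.
Proof. by case: HD => dD _; apply: (addrI (d 0)); rewrite -dD !addr0. Qed.

Lemma F_natZ n w : F (n%:R *: w) = n%:R *: F w.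
Proof.
case: HF => FD _; rewrite !scaler_nat.
by elim: n => [|n IH]; rewrite ?mulr0n ?F0 // !mulrS FD IH.
Qed.

Lemma F_invnZ n w : (0 < n)%N -> F (n%:R^-1 *: w) = n%:R^-1 *: F w.
Proof.
move=> n_gt0; have n0 : (n%:R : R) != 0 by rewrite pnatr_eq0 -lt0n.
have -> : F w = n%:R *: F (n%:R^-1 *: w) by rewrite -F_natZ scalerA mulfV // scale1r.
by rewrite scalerA mulVf // scale1r.
Qed.

Lemma F_vpoly_harmonic n c m :
  F (vpoly n c (harmonic m)) = vpoly n (fun k => F (c k)) (harmonic m).
Proof.
case: HF => FD _; rewrite /vpoly (big_morph F FD F0); apply: eq_bigr => k _.
by rewrite /= exprVn -natrX F_invnZ // expn_gt0.
Qed.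

Lemma center_derivation z : central z -> central (d z).
Proof.
case: HD => _ dM Zz x.
have := dM z x; rewrite Zz dM (Zz (d x)) => dzx.
by apply: (addIr (d x ** z)); rewrite -dzx addrC.
Qed.

Definition Fjordan p q x y := F (x ^^ p ** y ^^ q) + jordan mul (x ^^ p) (y ^^ q).

Lemma central_apow_mul_apow x0 y0 e p q z : (0 < p)%N -> central z -> d z <> 0 ->
  (forall x y, ball x0 e x -> ball y0 e y -> central (Fjordan p q x y)) ->
  forall x y, ball x0 e x -> ball y0 e y -> central (x ^^ p ** y ^^ q).
Proof.
move=> p_gt0 Zz dz0 ZG x y x_ball y_ball; case: p p_gt0 ZG => // p _ ZG.
set X := x ^^ p.+1; set Y := y ^^ q.
pose e_ k := F (powD_coef x (z ** x) p k ** Y) + jordan mul (powD_coef x (z ** x) p k) Y.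
have Ze1 : central (e_ 1%N).
  apply: (vpoly_coef_closed center_closed center0 centerB (n := p.+1)) => //.
  apply: filterS (near_ball_shift (z ** x) x_ball) => m xm_ball.
  have := ZG _ _ xm_ball y_ball.
  by rewrite /Fjordan apowD_vpoly /jordan vpoly_mull vpoly_mulr F_vpoly_harmonic !vpolyD.
have e1E : e_ 1%N = p.+1%:R *: (X ** Y ** d z + z ** Fjordan p.+1 q x y).
  case: HF => _ FM.
  rewrite /e_ /Fjordan /jordan powD_coef1 // -/X -/Y mulZl mulZr F_natZ -mulA.
  rewrite (Zz (X ** Y)) FM -!scalerDr; congr (_ *: _).
  rewrite !mulDr -(Zz (F _)) -(Zz (X ** Y)) (mulA Y z X) -(Zz Y) -(mulA z Y X).
  by rewrite (addrC (z ** F _)) -addrA.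
have p1_neq0 : (p.+1%:R : R) != 0 by rewrite pnatr_eq0.
have ZXYdz : central (X ** Y ** d z).
  rewrite e1E in Ze1.
  by have := centerB (centerZK p1_neq0 Ze1) (centerM Zz (ZG _ _ x_ball y_ball)); rewrite addrK.
exact: center_cancel (center_derivation Zz) dz0 ZXYdz.
Qed.

Lemma central_apow_ideal x0 y0 e p q z : (0 < p)%N -> 0 < e -> central z -> z <> 0 ->
  (forall x y, ball x0 e x -> ball y0 e y -> central (x ^^ p ** y ^^ q)) ->
  forall y, ball y0 e y -> central (y ^^ q) /\ forall b, central (b ** y ^^ q).
Proof.
move=> p_gt0 e_gt0 Zz z0 ZXY y y_ball; case: p p_gt0 ZXY => // p _ ZXY.
set Y := y ^^ q.
have ZxY x : ball x0 e x -> central Y /\ central (x ** Y).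
  move=> x_ball.
  have Zcoef k : (k <= p.+1)%N -> central (powD_coef x z p k ** Y).
    apply: (vpoly_coef_closed center_closed center0 centerB
              (c := fun k => powD_coef x z p k ** Y)).
    apply: filterS (near_ball_shift z x_ball) => m xm_ball.
    by rewrite -vpoly_mull -apowD_vpoly; exact: ZXY.
  have [Zzp zp0] := apow_center p.+1 Zz z0.
  split.
    by apply: center_cancel_l Zzp zp0 _; rewrite -(powD_coef_top x); exact: Zcoef.
  apply: (iter_center_cancel (k := p) Zz z0); apply: (@centerZK p.+1%:R).
    by rewrite pnatr_eq0.
  by rewrite -iter_mulr -mulZl -powD_coef_subtop //; exact: Zcoef.
have x0_ball := ballxx x0 e_gt0.
split=> [|b]; first exact: (ZxY x0 x0_ball).1.
have [m xm_ball] := filter_ex (near_ball_shift b x0_ball).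
have := centerB (ZxY _ xm_ball).2 (ZxY _ x0_ball).2.
rewrite mulDl addrC addKr mulZl; apply: centerZK.
exact: lt0r_neq0 (harmonic_gt0 m).
Qed.

Lemma exists_apow_neq0 y0 e q z : (0 < q)%N -> 0 < e -> central z -> z <> 0 ->
  exists y, ball y0 e y /\ y ^^ q <> 0.
Proof.
move=> q_gt0 e_gt0 Zz z0; apply: contrapT => all0.
case: q q_gt0 all0 => // q _ all0.
have [_] := apow_center q.+1 Zz z0; apply.
rewrite -(powD_coef_top y0).
apply: (vpoly_coef_closed (S := [set 0]) _ _ _ _ (leqnn q.+1)) => //.
- exact: closed_set0.
- by move=> a b /= -> ->; rewrite subrr.
apply: filterS (near_ball_shift z (ballxx y0 e_gt0)) => m y_ball /=.
by rewrite -apowD_vpoly; apply: contrapT => ym0; apply: all0; exists (y0 + harmonic m *: z).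
Qed.

Lemma commutative_of_locally_central x0 y0 e p q z :
  0 < e -> (0 < p)%N -> (0 < q)%N -> central z -> d z <> 0 ->
  (forall x y, ball x0 e x -> ball y0 e y -> central (Fjordan p q x y)) ->
  forall a b, a ** b = b ** a.
Proof.
move=> e_gt0 p_gt0 q_gt0 Zz dz0 ZG.
have z0 : z <> 0 by move=> z0; apply: dz0; rewrite z0 d0.
have [y [y_ball yq0]] := exists_apow_neq0 y0 q_gt0 e_gt0 Zz z0.
have ZXY := central_apow_mul_apow p_gt0 Zz dz0 ZG.
have [Zyq Zbyq] := central_apow_ideal p_gt0 e_gt0 Zz z0 ZXY y_ball.
exact: commutative_of_central_ideal Zyq yq0 Zbyq.
Qed.

Lemma continuous_Fjordan p q : continuous F ->
  continuous (fun w : V * V => Fjordan p q w.1 w.2).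
Proof.
move=> cF.
have cXp : continuous (fun w : V * V => w.1 ^^ p).
  by apply: continuous_apow => w; exact: cvg_fst.
have cYq : continuous (fun w : V * V => w.2 ^^ q).
  by apply: continuous_apow => w; exact: cvg_snd.
have cXY := continuous_mul cXp cYq; have cYX := continuous_mul cYq cXp.
move=> w; apply: cvgD; first exact: continuous_comp (cXY w) (cF _).
exact: cvgD (cXY w) (cYX w).
Qed.

End BanachAlgebra.

Theorem theorem3p1 (R : realType) (V : completeNormedModType R)
  (mul : V -> V -> V) (F d : V -> V) (H1 H2 : set V) :
  banach_algebra_mul mul ->
  prime_alg mul ->
  open H1 -> open H2 -> H1 !=set0 -> H2 !=set0 ->
  is_derivation mul d ->
  is_gen_derivation mul F d ->
  continuous F ->
  ~ injective d ->
  (forall x y, H1 x -> H2 y ->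
     exists p q : nat, (0 < p)%N /\ (0 < q)%N /\
       alg_center mul (F (mul (apow mul x p) (apow mul y q))
                   + jordan mul (apow mul x p) (apow mul y q))) ->
  (forall x y, mul x y = mul y x) \/ (forall z, alg_center mul z -> d z = 0).
Proof.
(* The argument does not need d to be non-injective. *)
move=> BA PR oH1 oH2 [x1 H1x1] [y1 H2y1] HD HF cF _ HZ.
case: (pselect (forall z, alg_center mul z -> d z = 0)) => [|/existsNP [z /not_implyP [Zz dz0]]];
  [by right | left].
pose C (pq : nat * nat) : set (pair_space V) :=
  [set w | alg_center mul (Fjordan mul F pq.1.+1 pq.2.+1 w.1 w.2)].
have [[p q] [[x0 y0] [e [e_gt0 eC]]]] :
    exists pq (w : pair_space V) (e : R), 0 < e /\ ball w e `<=` C pq.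
  apply: (@closed_cover_ball R (pair_space V) _ C (H1 `*` H2)); first exact: open_setX.
  - by exists (x1, y1).
  - move=> pq; apply: preimage_closed (center_closed BA).
    by move=> w _; exact: continuous_Fjordan.
  - move=> [x y] [/= H1x H2y]; have [p [q [p_gt0 [q_gt0 Zxy]]]] := HZ x y H1x H2y.
    by exists (p.-1, q.-1) => //; rewrite /C /= !prednK.
apply: (commutative_of_locally_central BA PR HD HF (x0 := x0) (y0 := y0) e_gt0
          (ltn0Sn p) (ltn0Sn q) Zz dz0).
by move=> x y x_ball y_ball; apply: (eC (x, y)); apply/pair_ballE.
Qed.
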